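(* Let $m\equiv 2\pmod 4$ and $L=L'$. For $a\in\mathcal{R}$ the Lee weight of $ev(a)=(Tr(ax))_{x\in L'}$ is: (a) $0$ if $a=0$; (b) if $a=(u-1)^2a_3$ with $a_3\in\mathbb{F}_{3^m}$: $w_L(ev(a))=3^{3m}-3^{5m/2}$ when $a_3\in\mathcal{Q}$, and $w_L(ev(a))=3^{3m}+3^{5m/2}$ when $a_3\in\mathcal{N}$; (c) $w_L(ev(a))=3^{3m}-3^{2m}$ if $a\in\mathcal{R}\setminus\langle (u-1)^2\rangle$.
   Context: Let $R=\mathbb{F}_3[u]/(u^3-1)$ and $\mathcal{R}=\mathbb{F}_{3^m}[u]/(u^3-1)=\mathbb{F}_{3^m}+u\mathbb{F}_{3^m}+u^2\mathbb{F}_{3^m}$. Every element of $\mathcal{R}$ is uniquely $x_1+x_2(u-1)+x_3(u-1)^2$ with $x_i\in\mathbb{F}_{3^m}$; units are those with $x_1\neq0$. $\langle (u-1)^2\rangle=\{(u-1)^2a_3:a_3\in\mathbb{F}_{3^m}\}$. $Tr:\mathcal{R}\to R$ is $Tr(a+ub+u^2c)=tr(a)+u\,tr(b)+u^2tr(c)$, with $tr$ the absolute trace $\mathbb{F}_{3^m}\to\mathbb{F}_3$. $\mathcal{Q}$ and $\mathcal{N}$ denote the nonzero squares and the nonsquares of $\mathbb{F}_{3^m}$; $L'=\{x_1+x_2(u-1)+x_3(u-1)^2:x_1\in\mathcal{Q},x_2,x_3\in\mathbb{F}_{3^m}\}$. The Gray map $\phi:R\to\mathbb{F}_3^3$ is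 $\phi(a'+ub'+u^2c')=(a',b',c')$ ($a',b',c'\in\mathbb{F}_3$), extended coordinatewise to $R^n\to\mathbb{F}_3^{3n}$; the Lee weight $w_L(v)$ of $v\in R^n$ is the Hamming weight of $\phi(v)$. *)

From mathcomp Require Import all_boot all_order all_algebra.
Set Implicit Arguments. Unset Strict Implicit. Unset Printing Implicit Defensive.
Import GRing.Theory.
Local Open Scope ring_scope.

(* F plays the role of F_{3^m} (a finite field with #|F| = 3^m).
   Elements of  calR = F[u]/(u^3-1)  are triples ((a,b),c) meaning a + u b + u^2 c. *)
Definition calR (F : finFieldType) := (F * F * F)%type.

Section Defs.
Variable F : finFieldType.

(* multiplication in F[u]/(u^3 - 1) *)
Definition mulR (x y : calR F) : calR F :=
  let: (a, b, c) := x in let: (a', b', c') := y in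
  (a * a' + b * c' + c * b', a * b' + b * a' + c * c', a * c' + b * b' + c * a').

(* the element x1 + x2 (u-1) + x3 (u-1)^2 written in the basis 1, u, u^2 *)
Definition uB (x1 x2 x3 : F) : calR F := (x1 - x2 + x3, x2 - x3 *+ 2, x3).

(* absolute trace F_{3^m} -> F_3 ; its values lie in the prime subfield F_3 of F *)
Definition tr (m : nat) (x : F) : F := \sum_(i < m) x ^+ (3 ^ i).

Definition isQ (x : F) : bool := (x != 0) && [exists y : F, y ^+ 2 == x].
Definition isN (x : F) : bool := ~~ [exists y : F, y ^+ 2 == x].

Definition in_ideal_u1sq (a : calR F) : Prop := exists a3 : F, a = uB 0 0 a3.

(* Lee weight of an element of R = F_3[u]/(u^3-1), given by its coefficient
   triple (a',b',c') (with a',b',c' in the prime field F_3 of F):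
   Hamming weight of its Gray image (a',b',c'). *)
Definition leeR (r : calR F) : nat :=
  let: (a, b, c) := r in (((a != 0%R) : nat) + ((b != 0%R) : nat) + ((c != 0%R) : nat))%N.

Definition TrR (m : nat) (r : calR F) : calR F :=
  let: (a, b, c) := r in (tr m a, tr m b, tr m c).

(* Lee weight of ev(a) = (Tr(a x))_{x in L'}, where
   L' = { x1 + x2(u-1) + x3(u-1)^2 : x1 in Q, x2, x3 in F } (indexed bijectively
   by the triples (x1,x2,x3) with x1 in Q). *)
Definition wL_ev (m : nat) (a : calR F) : nat :=
  (\sum_(t : F * F * F | isQ t.1.1) leeR (TrR m (mulR a (uB t.1.1 t.1.2 t.2))))%N.

End Defs.

From mathcomp Require Import all_boot all_order all_algebra ring zify.
From mathcomp Require Import finfield cyclic.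
Set Implicit Arguments. Unset Strict Implicit. Unset Printing Implicit Defensive.
Import GRing.Theory.
Local Open Scope ring_scope.

Lemma card_imset_sep (aT rT : finType) (f : aT -> rT) (A : {set aT}) (P : pred rT) :
  {in A &, injective f} -> #|[set y in f @: A | P y]| = #|[set x in A | P (f x)]|.
Proof.
move=> f_inj; rewrite -(@card_in_imset _ _ f [set x in A | P (f x)]); last first.
  by move=> x y /setIdP[xA _] /setIdP[yA _]; apply: f_inj.
apply: eq_card => y; rewrite inE.
apply/andP/imsetP => [[/imsetP[x xA ->] Pfx] | [x /setIdP[xA Pfx] ->]].
  by exists x; rewrite ?inE ?xA.
by rewrite imset_f.
Qed.

Lemma card_set_split (T : finType) (A P : pred T) :
  #|[set x | A x]| = (#|[set x | A x && P x]| + #|[set x | A x && ~~ P x]|)%N.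
Proof. by rewrite -!sum1dep_card (bigID P). Qed.

Lemma uB_surj (F : finFieldType) (a : calR F) : exists a1 a2 a3, a = uB a1 a2 a3.
Proof.
case: a => [[a b] c]; exists (a + b + c), (b + c *+ 2), c.
by rewrite /uB; congr (_, _, _); ring.
Qed.

Lemma tr0 (F : finFieldType) n : tr n (0 : F) = 0.
Proof. by rewrite /tr big1 // => i _; rewrite expr0n expn_eq0. Qed.

Lemma tr_addn (F : finFieldType) n (z : F) : tr (n + n) z = tr n z + tr n (z ^+ (3 ^ n)).
Proof. by rewrite /tr big_split_ord /=; congr (_ + _); apply: eq_bigr => j _; rewrite expnD exprM. Qed.

Section CharThree.
Variables (F : finFieldType) (hF3 : 3 \in [pchar F]).

Lemma pnat_exp3 n : [pchar F].-nat (3 ^ n)%N.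
Proof. by rewrite pnatX (eq_pnat _ (pcharf_eq hF3)) pnat_id ?(pcharf_prime hF3). Qed.

Lemma trD n : {morph @tr F n : x y / x + y}.
Proof.
move=> x y; rewrite /tr -big_split; apply: eq_bigr => i _.
exact: exprDn_pchar (pnat_exp3 i).
Qed.

Lemma trN n : {morph @tr F n : x / - x}.
Proof.
by move=> x; rewrite /tr -sumrN; apply: eq_bigr => i _; apply: exprNn_pchar (pnat_exp3 i).
Qed.

Lemma eq_pchar3 (x y z : F) : x - y = 3%:R * z -> x = y.
Proof. by move/eqP; rewrite (pcharf0 hF3) mul0r subr_eq0 => /eqP. Qed.

Lemma natr_ord3_inj : injective (fun c : 'I_3 => c%:R : F).
Proof.
move=> c d /eqP; rewrite -subr_eq0.
wlog lt_dc : c d / (d <= c)%N => [hw | ].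
  by case: (leqP d c) => [/hw // | /ltnW/hw]; rewrite -oppr_eq0 opprB => /[apply] ->.
rewrite -natrB // -(dvdn_pcharf hF3) => /dvdnP[q hq]; apply: val_inj => /=.
have := ltn_ord c; have := ltn_ord d; lia.
Qed.

Lemma cube_eq_F3 (t : F) : t ^+ 3 = t -> exists c : 'I_3, t = c%:R.
Proof.
move=> t3; have : t * (t - 1) * (t - 2%:R) = 0.
  have -> : t * (t - 1) * (t - 2%:R) = t ^+ 3 - t + 3%:R * (t - t ^+ 2) by ring.
  by rewrite t3 subrr add0r (pcharf0 hF3) mul0r.
move/eqP; rewrite !mulf_eq0 !subr_eq0 => /orP[/orP[] | ] /eqP ->.
- by exists ord0.
- by exists (Ordinal (isT : 1 < 3)%N).
- by exists (Ordinal (isT : 2 < 3)%N).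
Qed.

Lemma tr_F3 n (x : F) : x ^+ (3 ^ n) = x -> exists c : 'I_3, tr n x = c%:R.
Proof.
move=> xfix; apply: cube_eq_F3.
have -> : tr n x ^+ 3 = \sum_(i < n) x ^+ (3 ^ i.+1).
  rewrite -[_ ^+ 3]/(pFrobenius_aut hF3 (tr n x)) rmorph_sum.
  apply: eq_bigr => i _.
  by rewrite -[LHS]/(x ^+ (3 ^ i) ^+ 3) -exprM expnSr.
apply: (@addIr _ x); transitivity (\sum_(i < n.+1) x ^+ (3 ^ i)).
  by rewrite big_ord_recl expn0 expr1 addrC.
by rewrite big_ord_recr /= xfix.
Qed.


Lemma card_tr_fiber_le n (c : F) :
  (0 < n)%N -> (#|[set x | tr n x == c]| <= 3 ^ (n - 1))%N.
Proof.
move=> n_gt0; pose p : {poly F} := \sum_(i < n) 'X^(3 ^ i) - c%:P.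
have size_p : size p = (3 ^ (n - 1)).+1.
  rewrite /p; case: n n_gt0 {p} => // n _; rewrite big_ord_recr /= subn1 /= -addrA.
  rewrite addrC size_addl; rewrite size_XnsubC ?expn_gt0 // ltnS.
  apply: (leq_trans (size_sum _ _ _)); apply/bigmax_leqP => i _.
  by rewrite size_polyXn ltn_exp2l.
rewrite -ltnS -size_p cardE; apply: max_poly_roots; last exact: enum_uniq.
- by rewrite -size_poly_eq0 size_p.
apply/allP => x; rewrite mem_enum inE /root /p hornerD hornerN hornerC horner_sum.
by under eq_bigr => i _ do rewrite hornerXn; rewrite subr_eq0.
Qed.

Lemma sum_tr_partition n (S : {set F}) (G : F -> nat) :
    {in S, forall x, x ^+ (3 ^ n) = x} ->
  (\sum_(x in S) G x = \sum_(c < 3) \sum_(x in S | tr n x == c%:R) G x)%N.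
Proof.
move=> Sfix; under [RHS]eq_bigr => c _ do rewrite big_mkcondr.
rewrite exchange_big /=; apply: eq_bigr => x /Sfix /tr_F3[c0 ->].
rewrite (bigD1 c0) //= eqxx big1 ?addn0 // => d.
by rewrite (inj_eq natr_ord3_inj) eq_sym => /negbTE->.
Qed.

Lemma card_tr_fiber n (S : {set F}) (c : 'I_3) :
    (0 < n)%N -> {in S, forall x, x ^+ (3 ^ n) = x} -> #|S| = (3 ^ n)%N ->
  #|[set x in S | tr n x == c%:R]| = (3 ^ (n - 1))%N.
Proof.
move=> n_gt0 Sfix cardS; set N := (3 ^ (n - 1))%N.
pose f (d : 'I_3) := #|[set x in S | tr n x == d%:R]|.
have f_le d : (f d <= N)%N.
  apply: leq_trans (card_tr_fiber_le d%:R n_gt0); apply: subset_leq_card.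
  by apply/subsetP => x; rewrite !inE => /andP[].
have sum_f : (\sum_(d < 3) f d = 3 * N)%N.
  rewrite /N -expnS subn1 prednK // -cardS -sum1_card (sum_tr_partition _ Sfix).
  by apply: eq_bigr => d _; rewrite sum1dep_card.
have : (\sum_(d < 3) (N - f d) == 0)%N.
  by rewrite sumnB // sum_f big_const_ord /= addn0 !mulSn mul0n addn0 subnn.
rewrite sum_nat_eq0 => /forallP/(_ c); rewrite subn_eq0 => le_N_fc.
by apply/eqP; rewrite eqn_leq f_le.
Qed.

Lemma two_neq0_pchar3 : 2%:R != 0 :> F.
Proof. by rewrite -(dvdn_pcharf hF3). Qed.

Lemma mulR_uB (a1 a2 a3 x1 x2 x3 : F) :
  mulR (uB a1 a2 a3) (uB x1 x2 x3) =
  uB (a1 * x1) (a1 * x2 + a2 * x1) (a1 * x3 + a2 * x2 + a3 * x1).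
Proof.
rewrite /mulR /uB; congr (_, _, _).
- by apply: (@eq_pchar3 _ _ (- (a3 * x3))); ring.
- by apply: (@eq_pchar3 _ _ (a2 * x3 + a3 * x2 - a3 * x3)); ring.
- by apply: (@eq_pchar3 _ _ (a3 * x3 *+ 2 - a2 * x3 - a3 * x2)); ring.
Qed.

Lemma TrR_uB n (y1 y2 y3 : F) :
  TrR n (uB y1 y2 y3) = uB (tr n y1) (tr n y2) (tr n y3).
Proof. by rewrite /TrR /uB /= !trD !trN mulr2n trD. Qed.

Lemma leeR_uB_natr (a b c : nat) :
  leeR (uB a%:R b%:R c%:R : calR F) =
  (~~ (3 %| a + b + b + c) + ~~ (3 %| b + c) + ~~ (3 %| c))%N.
Proof.
rewrite /leeR /uB /=.
have -> : a%:R - b%:R + c%:R = (a + b + b + c)%:R :> F.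
  by apply: (@eq_pchar3 _ _ (- b%:R)); rewrite !natrD; ring.
have -> : b%:R - c%:R *+ 2 = (b + c)%:R :> F.
  by apply: (@eq_pchar3 _ _ (- c%:R)); rewrite natrD; ring.
by rewrite !(dvdn_pcharf hF3).
Qed.

Lemma sum_leeR_uB (c : 'I_3) :
  (\sum_(s < 3) \sum_(t < 3) leeR (uB c%:R s%:R t%:R : calR F) = 18)%N.
Proof. by case: c => [[|[|[|]]]] // ?; rewrite !big_ord_recr !big_ord0 !leeR_uB_natr. Qed.

Lemma sum_leeR_uB0 (s : 'I_3) : (\sum_(t < 3) leeR (uB 0%R s%:R t%:R : calR F) = 6)%N.
Proof.
rewrite -[0 : F]/(0%:R).
by case: s => [[|[|[|]]]] // ?; rewrite !big_ord_recr !big_ord0 !leeR_uB_natr.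
Qed.

Lemma leeR_uB00 (y : F) : leeR (uB 0 0 y) = (3 * (y != 0%R))%N.
Proof.
rewrite /leeR /uB /= subrr add0r sub0r oppr_eq0 -mulr_natl mulf_eq0.
by rewrite (negbTE two_neq0_pchar3); case: (y != 0).
Qed.

End CharThree.

Section Squares.
Variable F : finFieldType.

Lemma isQ_mul (a x : F) : isQ a -> isQ x -> isQ (a * x).
Proof.
rewrite /isQ => /andP[a0 /existsP[s /eqP sa]] /andP[x0 /existsP[t /eqP tx]].
by rewrite mulf_neq0 //=; apply/existsP; exists (s * t); rewrite exprMn sa tx.
Qed.

Lemma isN_mul (a x : F) : isN a -> isQ x -> isN (a * x).
Proof.
rewrite /isN => aN /andP[x0 /existsP[t /eqP xt]]; apply: contra aN => /existsP[z /eqP za].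
have t0 : t != 0 by apply: contraNneq x0 => t0; rewrite -xt t0 expr0n.
apply/existsP; exists (z / t).
by rewrite exprMn exprVn za -xt mulfK // expf_neq0.
Qed.

Lemma isN_neq0 (a : F) : isN a -> a != 0.
Proof. by apply: contraNneq => ->; apply/existsP; exists 0; rewrite expr0n. Qed.

Lemma isQ_isN_partition (y : F) : y != 0 -> isQ y (+) isN y.
Proof. by rewrite /isQ /isN => ->; case: [exists _, _]. Qed.

Hypothesis two_neq0 : 2%:R != 0 :> F.

Lemma card_sqr_preim (P : pred F) :
  #|[set x | P (x ^+ 2)]| = (P 0%R + 2 * #|[set y | isQ y && P y]|)%N.
Proof.
rewrite (cardsD1 0) inE expr0n /=; congr (_ + _)%N.
transitivity #|[set x | (x != 0) && P (x ^+ 2)]|; first by apply: eq_card => x; rewrite !inE.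
rewrite -!sum1dep_card (partition_big (fun x => x ^+ 2) (fun y => isQ y && P y)); last first.
  by move=> x /andP[x0 ->]; rewrite /isQ sqrf_eq0 x0 andbT; apply/existsP; exists x.
rewrite big_distrr /= muln1; apply: eq_bigr => y /andP[/andP[y0 /existsP[r /eqP ry]] Py].
have r_neq_Nr : r != - r.
  apply: contraNneq y0 => rNr; rewrite -ry.
  have : 2%:R * r = 0 by rewrite mulr2n mulrDl mul1r {2}rNr subrr.
  by move/eqP; rewrite mulf_eq0 (negbTE two_neq0) => /eqP->; rewrite expr0n.
transitivity #|[set r; - r]|; last by rewrite cards2 r_neq_Nr.
rewrite sum1dep_card; apply: eq_card => x; rewrite !inE -ry eqf_sqr.
have r0 : r != 0 by apply: contraNneq y0 => r0; rewrite -ry r0 expr0n.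
case: (x =P r) => [-> | _]; last case: (x =P - r) => [-> | _].
all: by rewrite ?sqrrN ?ry ?Py ?oppr_eq0 ?r0 ?andbF.
Qed.


Lemma card_isQ : (2 * #|[set y : F | isQ y]|)%N = (#|F| - 1)%N.
Proof.
have := card_sqr_preim xpredT; rewrite cardsT => ->.
by rewrite add1n subSS subn0; congr (2 * _)%N; apply: eq_card => y; rewrite !inE andbT.
Qed.

Lemma card_isN : #|[set y : F | isN y]| = #|[set y : F | isQ y]|.
Proof.
have QUN : [set~ 0] = [set y : F | isQ y] :|: [set y | isN y].
  apply/setP => y; rewrite !inE; have [-> | /isQ_isN_partition] := eqVneq y 0.
    by rewrite /isQ eqxx /isN negbK; apply/esym/existsP; exists 0; rewrite expr0n.
  by case: (isQ y); case: (isN y).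
have QIN : [set y : F | isQ y] :&: [set y | isN y] = set0.
  by apply/setP => y; rewrite !inE /isQ /isN; case: [exists _, _]; rewrite ?andbF.
have := cardsUI [set y : F | isQ y] [set y | isN y].
rewrite -QUN QIN cards0 addn0 cardsC1 -subn1 -card_isQ mul2n -addnn.
by move/addnI->.
Qed.

Lemma imset_scale_isQ (a : F) :
  isQ a -> (fun x => a * x) @: [set x | isQ x] = [set x | isQ x].
Proof.
move=> aQ; have a0 : a != 0 by case/andP: aQ.
apply/eqP; rewrite eqEcard card_imset ?leqnn ?andbT; last exact: mulfI.
by apply/subsetP => y /imsetP[x]; rewrite inE => xQ ->; rewrite inE; apply: isQ_mul.
Qed.

Lemma imset_scale_isN (a : F) :
  isN a -> (fun x => a * x) @: [set x | isQ x] = [set x | isN x].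
Proof.
move=> aN; apply/eqP; rewrite eqEcard card_imset ?card_isN ?leqnn ?andbT.
  by apply/subsetP => y /imsetP[x]; rewrite inE => xQ ->; rewrite inE; apply: isN_mul.
exact/mulfI/isN_neq0.
Qed.

Lemma card_scale_isQ (a : F) (P : pred F) :
  isQ a -> #|[set x | isQ x && P (a * x)]| = #|[set y | isQ y && P y]|.
Proof.
move=> aQ; have a0 : a != 0 by case/andP: aQ.
transitivity #|[set y in (fun x => a * x) @: [set x | isQ x] | P y]|.
  by rewrite card_imset_sep; [apply: eq_card => x; rewrite !inE | move=> x y _ _; apply: mulfI].
by rewrite imset_scale_isQ //; apply: eq_card => y; rewrite !inE.
Qed.

Lemma card_scale_isN (a : F) (P : pred F) :
  isN a -> #|[set x | isQ x && P (a * x)]| = #|[set y | isN y && P y]|.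
Proof.
move=> aN; have a0 := isN_neq0 aN.
transitivity #|[set y in (fun x => a * x) @: [set x | isQ x] | P y]|.
  by rewrite card_imset_sep; [apply: eq_card => x; rewrite !inE | move=> x y _ _; apply: mulfI].
by rewrite imset_scale_isN //; apply: eq_card => y; rewrite !inE.
Qed.

End Squares.

Section TraceSums.
Variables (F : finFieldType) (m : nat).
Hypotheses (m_gt0 : (0 < m)%N) (cardF : #|F| = (3 ^ m)%N).

Let hF3 : 3 \in [pchar F] := card_finPcharP cardF (isT : prime 3).

Let cardF_pred : #|F| = (3 * 3 ^ (m - 1))%N.
Proof. by rewrite cardF -expnS subn1 prednK. Qed.

Lemma sum_tr (g : F -> nat) :
  (\sum_x g (tr m x) = 3 ^ (m - 1) * \sum_(c < 3) g c%:R)%N.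
Proof.
have Ffix : {in [set: F], forall x, x ^+ (3 ^ m) = x} by move=> x _; rewrite -cardF expf_card.
rewrite (eq_bigl (mem [set: F])); last by move=> x /[!inE].
rewrite (sum_tr_partition hF3 _ Ffix) big_distrr; apply: eq_bigr => c _.
transitivity (\sum_(x in [set: F] | tr m x == c%:R) g c%:R)%N.
  by apply: eq_bigr => x /andP[_ /eqP ->].
by rewrite sum_nat_cond_const (card_tr_fiber hF3 c m_gt0 Ffix) ?cardsT // mulnC.
Qed.

Lemma card_tr_neq0 : #|[set x : F | tr m x != 0]| = (2 * 3 ^ (m - 1))%N.
Proof.
rewrite -sum1dep_card big_mkcond /= (sum_tr (fun t => (t != 0 : nat))).
rewrite !big_ord_recr big_ord0 /= eqxx oner_eq0 (negbTE (two_neq0_pchar3 hF3)) /=.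
by rewrite mulnC.
Qed.

Lemma sum_tr_affine (g : F -> nat) (a b : F) : a != 0 ->
  (\sum_x g (tr m (a * x + b)%R) = 3 ^ (m - 1) * \sum_(c < 3) g c%:R)%N.
Proof.
move=> a0; have inj_ab : injective (fun x => a * x + b) by move=> x y /addIr/(mulfI a0).
by rewrite -sum_tr (reindex_inj (P := xpredT) (F := fun y => g (tr m y)) inj_ab).
Qed.


Lemma tr_ord3 (y : F) : exists c : 'I_3, tr m y = c%:R.
Proof. by apply: (tr_F3 hF3); rewrite -cardF expf_card. Qed.

Lemma wL_ev_sum (a : calR F) : wL_ev m a =
  (\sum_(x1 | isQ x1) \sum_x2 \sum_x3 leeR (TrR m (mulR a (uB x1 x2 x3))))%N.
Proof.
rewrite /wL_ev pair_big_dep pair_big /=; apply: eq_bigl => -[[x1 x2] x3] /=.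
by rewrite !andbT.
Qed.

Lemma sum_leeR_unit (a1 a2 a3 x1 : F) : a1 != 0 ->
  (\sum_x2 \sum_x3 leeR (TrR m (mulR (uB a1 a2 a3) (uB x1 x2 x3))) = 2 * #|F| ^ 2)%N.
Proof.
move=> a10.
under eq_bigr => x2 _ do under eq_bigr => x3 _ do rewrite (mulR_uB hF3) (TrR_uB hF3) -addrA.
have [c ->] := tr_ord3 (a1 * x1).
under eq_bigr => x2 _ do
  rewrite (sum_tr_affine (fun t => leeR (uB c%:R (tr m (a1 * x2 + a2 * x1)) t)) _ a10).
rewrite -big_distrr (sum_tr_affine (fun s => \sum_(t < 3) leeR (uB c%:R s t%:R)) _ a10).
by rewrite /= (sum_leeR_uB hF3) cardF_pred expnS expn1; nia.
Qed.


Lemma sum_leeR_nonunit (a2 a3 x1 : F) : a2 != 0 ->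
  (\sum_x2 \sum_x3 leeR (TrR m (mulR (uB 0%R a2 a3) (uB x1 x2 x3))) = 2 * #|F| ^ 2)%N.
Proof.
move=> a20.
under eq_bigr => x2 _ do under eq_bigr => x3 _ do
  rewrite (mulR_uB hF3) (TrR_uB hF3) !mul0r !add0r tr0.
have [c ->] := tr_ord3 (a2 * x1).
under eq_bigr => x2 _ do rewrite sum_nat_const.
rewrite -big_distrr (sum_tr_affine (fun t => leeR (uB 0%R c%:R t)) _ a20) /=.
by rewrite (sum_leeR_uB0 hF3) (@eq_card _ _ F) // cardF_pred expnS expn1; nia.
Qed.


Lemma sum_leeR_ideal (a3 x1 : F) :
  (\sum_x2 \sum_x3 leeR (TrR m (mulR (uB 0%R 0%R a3) (uB x1 x2 x3))) =
   3 * #|F| ^ 2 * (tr m (a3 * x1)%R != 0%R))%N.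
Proof.
under eq_bigr => x2 _ do under eq_bigr => x3 _ do
  rewrite (mulR_uB hF3) (TrR_uB hF3) !mul0r !add0r tr0.
under eq_bigr => x2 _ do rewrite (leeR_uB00 hF3) sum_nat_const.
by rewrite sum_nat_const (@eq_card _ _ F) //; nia.
Qed.


Lemma wL_ev_notin_ideal (a : calR F) :
  ~ in_ideal_u1sq a -> wL_ev m a = (#|F| ^ 2 * (#|F| - 1))%N.
Proof.
have [a1 [a2 [a3 ->]]] := uB_surj a; rewrite wL_ev_sum.
have [-> a_notin | a10 _] := eqVneq a1 0.
  have a20 : a2 != 0 by apply/eqP => a20; apply: a_notin; exists a3; rewrite a20.
  under eq_bigr => x1 _ do rewrite sum_leeR_nonunit //.
  by rewrite sum_nat_cond_const -(card_isQ (two_neq0_pchar3 hF3)); ring.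
under eq_bigr => x1 _ do rewrite sum_leeR_unit //.
by rewrite sum_nat_cond_const -(card_isQ (two_neq0_pchar3 hF3)); ring.
Qed.

Lemma wL_ev_ideal (a3 : F) : wL_ev m (uB 0 0 a3) =
  (3 * #|F| ^ 2 * #|[set x | isQ x && (tr m (a3 * x)%R != 0%R)]|)%N.
Proof.
rewrite wL_ev_sum; under eq_bigr => x1 _ do rewrite sum_leeR_ideal.
rewrite -big_distrr /= -sum1dep_card; congr (_ * _)%N.
rewrite [LHS]big_mkcond [RHS]big_mkcond; apply: eq_bigr => x _.
by case: (isQ x); case: (_ != _).
Qed.

End TraceSums.

Section TraceOfSquares.
Variables (F : finFieldType) (hF3 : 3 \in [pchar F]) (k : nat) (i : F).
Hypotheses (k_gt0 : (0 < k)%N) (cardF : #|F| = (3 ^ k * 3 ^ k)%N).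
Hypotheses (sqr_i : i ^+ 2 = -1) (frob_i : i ^+ (3 ^ k) = - i).

Local Notation sigma x := (x ^+ (3 ^ k)).

Let sigmaD (x y : F) : sigma (x + y) = sigma x + sigma y.
Proof. exact: exprDn_pchar (pnat_exp3 hF3 k). Qed.

Let sigmaN (x : F) : sigma (- x) = - sigma x.
Proof. exact: exprNn_pchar (pnat_exp3 hF3 k). Qed.

Let sigmaK (x : F) : sigma (sigma x) = x.
Proof. by rewrite -exprM -cardF expf_card. Qed.

Let i_neq0 : i != 0.
Proof. by apply: contra_eq_neq sqr_i => ->; rewrite expr0n eq_sym oppr_eq0 oner_eq0. Qed.

Definition eigen_sigma (c : F) := [set x : F | sigma x == c * x].

Lemma card_eigen_sigma_le (c : F) : (#|eigen_sigma c| <= 3 ^ k)%N.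
Proof.
pose p : {poly F} := 'X^(3 ^ k) - c *: 'X.
have size_p : size p = (3 ^ k).+1.
  rewrite /p size_addl ?size_polyXn // size_opp ltnS.
  apply: leq_trans (size_scale_leq _ _) _; rewrite size_polyX.
  by apply: (@leq_trans 3) => //; rewrite -{1}(expn1 3) leq_exp2l.
rewrite -ltnS -size_p cardE; apply: max_poly_roots; last exact: enum_uniq.
  by rewrite -size_poly_eq0 size_p.
apply/allP => x; rewrite mem_enum inE /root /p hornerD hornerN hornerZ hornerX hornerXn.
by rewrite subr_eq0.
Qed.


Lemma mul_eigen_sigma (c d a b : F) :
  a \in eigen_sigma c -> b \in eigen_sigma d -> a * b \in eigen_sigma (c * d).
Proof. by rewrite !inE exprMn => /eqP-> /eqP->; rewrite mulrACA. Qed.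

Local Notation Wp := (eigen_sigma i).
Local Notation Wm := (eigen_sigma (- i)).

Lemma eigen_sigma_decomp (x : F) : exists2 p, p \in setX Wp Wm & x = p.1 + p.2.
Proof.
exists (i * sigma x - x, - (x + i * sigma x)); last first.
  by apply: (@eq_pchar3 _ hF3 _ _ x) => /=; ring.
rewrite !inE /= !(sigmaD, sigmaN, exprMn) frob_i sigmaK; apply/andP; split; apply/eqP.
  have -> : i * (i * sigma x - x) = i ^+ 2 * sigma x - i * x by ring.
  by rewrite sqr_i; ring.
have -> : - i * - (x + i * sigma x) = i * x + i ^+ 2 * sigma x by ring.
by rewrite sqr_i; ring.
Qed.

Lemma eigen_sigma_add_inj : {in setX Wp Wm &, injective (fun p : F * F => p.1 + p.2)}.
Proof.
move=> [a b] [a' b']; rewrite !inE /= => /andP[/eqP sa /eqP sb] /andP[/eqP sa' /eqP sb'] /= e.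
have e' : a - a' = b' - b by rewrite -[a](addrK b) e; ring.
have da : sigma (a - a') = i * (a - a') by rewrite sigmaD sigmaN sa sa' mulrBr.
have db : sigma (b' - b) = - i * (b' - b) by rewrite sigmaD sigmaN sb sb' mulrBr.
have : i * (a - a') = - i * (a - a') by rewrite -da e' db.
move/eqP; rewrite -subr_eq0 -mulrBl opprK -mulr2n -mulr_natl !mulf_eq0.
rewrite (negbTE (two_neq0_pchar3 hF3)) (negbTE i_neq0) subr_eq0 => /eqP eq_a.
by move: e; rewrite eq_a => /addrI ->.
Qed.


Let mulNi : i * - i = 1.
Proof. by rewrite mulrN -expr2 sqr_i opprK. Qed.

Lemma imset_eigen_sigma_add : (fun p : F * F => p.1 + p.2) @: setX Wp Wm = [set: F].
Proof.
apply/setP => x; rewrite inE; apply/imsetP.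
by have [p pW ->] := eigen_sigma_decomp x; exists p.
Qed.

Lemma card_eigen_sigma_pm : #|Wp| = (3 ^ k)%N /\ #|Wm| = (3 ^ k)%N.
Proof.
have cardWW : (#|Wp| * #|Wm| = 3 ^ k * 3 ^ k)%N.
  by rewrite -cardsX -(card_in_imset eigen_sigma_add_inj) imset_eigen_sigma_add cardsT.
have := card_eigen_sigma_le i; have := card_eigen_sigma_le (- i); nia.
Qed.

Lemma imset_scale_eigen_sigma (a : F) :
  a \in Wp -> a != 0 -> (fun b => a * b) @: Wm = eigen_sigma 1.
Proof.
move=> aW a0; apply/eqP; rewrite eqEcard card_imset; last exact: mulfI.
rewrite (card_eigen_sigma_pm.2) card_eigen_sigma_le andbT.
by apply/subsetP => _ /imsetP[b bW ->]; rewrite -mulNi mul_eigen_sigma.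
Qed.


Lemma exists_eigen_sigma_neq0 : exists2 a, a \in Wp & a != 0.
Proof.
apply/exists_inP; apply: contraT; rewrite negb_exists_in => /forall_inP W0.
have : (#|Wp| <= #|[set 0%R : F]|)%N.
  by apply/subset_leq_card/subsetP => a /W0; rewrite negbK inE.
by rewrite card_eigen_sigma_pm.1 cards1 -(expn0 3) leq_exp2l // leqNgt k_gt0.
Qed.

Lemma tr_sqr_eigen_sigma (c a : F) :
  c ^+ 2 = -1 -> a \in eigen_sigma c -> tr (k + k) (a ^+ 2) = 0.
Proof.
move=> sqr_c; rewrite inE => /eqP sa.
by rewrite tr_addn -exprM mulnC exprM sa exprMn sqr_c mulN1r (trN hF3) subrr.
Qed.

Lemma tr_sqr_add (a b : F) :
  a \in Wp -> b \in Wm -> tr (k + k) ((a + b) ^+ 2) = tr k (a * b).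
Proof.
move=> aW bW; have := mul_eigen_sigma aW bW; rewrite mulNi inE mul1r => /eqP sab.
rewrite sqrrD !(trD hF3) (tr_sqr_eigen_sigma sqr_i aW).
rewrite (tr_sqr_eigen_sigma _ bW) ?sqrrN // add0r addr0 tr_addn sab.
by apply: (eq_pchar3 hF3 (z := tr k (a * b))); ring.
Qed.


Lemma card_tr_eigen_sigma_fiber (a : F) : a \in Wp -> a != 0 ->
  #|[set b in Wm | tr k (a * b) == 0]| = (3 ^ (k - 1))%N.
Proof.
move=> aW a0; rewrite -(@card_imset_sep _ _ (fun b => a * b) Wm (fun y => tr k y == 0)); last first.
  by move=> x y _ _; apply: mulfI.
rewrite imset_scale_eigen_sigma //; apply: (@card_tr_fiber _ hF3 k _ ord0) => //.
  by move=> y; rewrite inE mul1r => /eqP.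
by rewrite -(imset_scale_eigen_sigma aW a0) card_imset ?card_eigen_sigma_pm.2 //; apply: mulfI.
Qed.

Lemma card_tr_sqr_eq0 :
  #|[set x : F | tr (k + k) (x ^+ 2) == 0]| = (3 ^ k + (3 ^ k - 1) * 3 ^ (k - 1))%N.
Proof.
transitivity #|[set x in (fun p : F * F => p.1 + p.2) @: setX Wp Wm | tr (k + k) (x ^+ 2) == 0]|.
  by rewrite imset_eigen_sigma_add; apply: eq_card => x; rewrite !inE.
rewrite card_imset_sep; last exact: eigen_sigma_add_inj.
transitivity #|[set p in setX Wp Wm | tr k (p.1 * p.2) == 0]|.
  apply: eq_card => -[a b]; rewrite [in LHS]inE [in RHS]inE in_setX /=.
  by case aW: (a \in Wp); case bW: (b \in Wm); rewrite //= tr_sqr_add.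
rewrite -sum1dep_card (eq_bigl (fun p => (p.1 \in Wp) && ((p.2 \in Wm) && (tr k (p.1 * p.2) == 0)))); last first.
  by move=> -[a b]; rewrite !inE andbA.
rewrite -(pair_big_dep (fun a => a \in Wp) (fun a b => (b \in Wm) && (tr k (a * b) == 0)) (fun _ _ => 1%N)) /=.
have W0 : 0 \in Wp by rewrite inE mulr0 expr0n expn_eq0.
rewrite (bigD1 0) //=; under eq_bigl => b do rewrite mul0r tr0 eqxx andbT.
rewrite sum1_card card_eigen_sigma_pm.2.
under eq_bigr => a /andP[aW a0] do rewrite sum1dep_card card_tr_eigen_sigma_fiber //.
rewrite sum_nat_cond_const; congr (_ + _ * _)%N.
rewrite -card_eigen_sigma_pm.1 (cardsD1 0 Wp) W0 add1n subn1 /=.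
by apply: eq_card => a; rewrite !inE andbC.
Qed.

End TraceOfSquares.

Lemma exists_sqrt_neg1 (F : finFieldType) : (4 %| #|F|.-1)%N -> exists i : F, i ^+ 2 = -1.
Proof.
set N := #|F|.-1 => /dvdnP[j N_eq].
have cardF : #|F| = N.+1 by rewrite /N prednK // (ltnW (finNzRing_gt1 F)).
have N_gt0 : (0 < N)%N by have := finNzRing_gt1 F; rewrite cardF.
have j_gt0 : (0 < j)%N by move: N_gt0; rewrite N_eq muln_gt0 => /andP[].
have [z _ prim_z] : exists2 z : F, z \in enum [set~ 0] & N.-primitive_root z.
  apply/hasP/has_prim_root => //.
  - apply/allP => x; rewrite mem_enum !inE unity_rootE => x0; apply/eqP.
    by apply: (mulfI x0); rewrite mulr1 -exprS -cardF expf_card.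
  - exact: enum_uniq.
  - by rewrite -cardE cardsC1.
have : z ^+ (j * 2) != 1.
  rewrite -(prim_order_dvd prim_z) N_eq; apply/negP => /dvdn_leq.
  by rewrite muln_gt0 j_gt0 => /(_ isT); lia.
have : (z ^+ (j * 2)) ^+ 2 == 1 by rewrite -exprM -mulnA -N_eq prim_expr_order.
by rewrite sqrf_eq1 => /orP[-> // | /eqP z2N _]; exists (z ^+ j); rewrite -exprM.
Qed.

Lemma expn3_mod4 k : (3 ^ k = (if odd k then 3 else 1) %[mod 4])%N.
Proof. by elim: k => // k IH; rewrite expnS -modnMmr IH /=; case: (odd k). Qed.

Section OddDegree.
Variables (F : finFieldType) (k : nat).
Hypotheses (k_odd : odd k) (cardF : #|F| = (3 ^ (k + k))%N).

Let hF3 : 3 \in [pchar F] := card_finPcharP cardF (isT : prime 3).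

Let k_gt0 : (0 < k)%N.
Proof. by case: k k_odd. Qed.

Lemma card_tr_sqr_eq0_odd :
  #|[set x : F | tr (k + k) (x ^+ 2) == 0]| = (3 ^ k + (3 ^ k - 1) * 3 ^ (k - 1))%N.
Proof.
have four_dvd : (4 %| #|F|.-1)%N.
  rewrite cardF -subn1 -eqn_mod_dvd ?expn_gt0 //.
  by rewrite expn3_mod4 oddD addbb.
have [i sqr_i] := exists_sqrt_neg1 four_dvd.
have frob_i : i ^+ (3 ^ k) = - i.
  have i4 : i ^+ 4 = 1 by rewrite (exprM i 2 2) sqr_i sqrrN expr1n.
  by rewrite -(expr_mod _ i4) expn3_mod4 k_odd exprS sqr_i mulrN1.
have cardF2 : #|F| = (3 ^ k * 3 ^ k)%N by rewrite cardF expnD.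
by have := card_tr_sqr_eq0 hF3 k_gt0 cardF2 sqr_i frob_i.
Qed.


Lemma card_isQ_tr_neq0 :
  #|[set y : F | isQ y && (tr (k + k) y != 0)]| = (3 ^ (k - 1) * (3 ^ k - 1))%N.
Proof.
have split_Q := card_set_split (@isQ F) (fun y => tr (k + k) y == 0).
have sqr_preim := card_sqr_preim (two_neq0_pchar3 hF3) (fun y => tr (k + k) y == 0).
rewrite /= card_tr_sqr_eq0_odd tr0 eqxx in sqr_preim.
have card_Q := card_isQ (two_neq0_pchar3 hF3); rewrite cardF in card_Q.
have pow_k : (3 ^ k = 3 * 3 ^ (k - 1))%N by rewrite -expnS subn1 prednK.
move: split_Q sqr_preim card_Q; rewrite expnD pow_k /= add1n.
set B := (3 ^ (k - 1))%N; have B_gt0 : (0 < B)%N by rewrite expn_gt0.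
set Q := #|_|; set Q0 := #|_|; set Q1 := #|_|.
have BC : (B <= B * B)%N by rewrite leq_pmulr.
have e1 : ((3 * B - 1) * B = 3 * (B * B) - B)%N by rewrite mulnBl mul1n mulnA.
have e2 : (3 * B * (3 * B) = 9 * (B * B))%N by rewrite mulnACA.
have e3 : (B * (3 * B - 1) = 3 * (B * B) - B)%N by rewrite mulnC e1.
rewrite e1 e2 e3; lia.
Qed.


Lemma card_isN_tr_neq0 :
  #|[set y : F | isN y && (tr (k + k) y != 0)]| = (3 ^ (k - 1) * (3 ^ k + 1))%N.
Proof.
have := card_set_split (fun y => tr (k + k) y != 0) (@isQ F).
rewrite /= (card_tr_neq0 _ cardF) ?addn_gt0 ?k_gt0 //.
have -> : #|[set x : F | (tr (k + k) x != 0) && isQ x]| = #|[set y : F | isQ y && (tr (k + k) y != 0)]|.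
  by apply: eq_card => y; rewrite !inE andbC.
have -> : #|[set x : F | (tr (k + k) x != 0) && ~~ isQ x]| = #|[set y : F | isN y && (tr (k + k) y != 0)]|.
  apply: eq_card => y; rewrite !inE andbC; have [-> | y0] := eqVneq y 0.
    by rewrite tr0 eqxx !andbF.
  by have := isQ_isN_partition y0; case: (isQ y); case: (isN y).
rewrite card_isQ_tr_neq0 (_ : k + k - 1 = k + (k - 1))%N ?expnD; last by rewrite addnBA.
have pow_k : (3 ^ k = 3 * 3 ^ (k - 1))%N by rewrite -expnS subn1 prednK.
rewrite pow_k; set B := (3 ^ (k - 1))%N; have B_gt0 : (0 < B)%N by rewrite expn_gt0.
have BC : (B <= B * B)%N by rewrite leq_pmulr.
rewrite -!mulnA mulnBr mulnDr muln1 (mulnCA B 3%N).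
by set N1 := #|_|; lia.
Qed.

End OddDegree.

Theorem theorem5p2 (F : finFieldType) (m : nat)
    (hF : #|F| = (3 ^ m)%N) (hm : (m %% 4 = 2)%N) (a : calR F) :
  (a = (0, 0, 0) -> wL_ev m a = 0%N) /\
  (forall a3 : F, a = uB 0 0 a3 ->
     (isQ a3 -> wL_ev m a = (3 ^ (3 * m) - 3 ^ ((5 * m) %/ 2))%N) /\
     (isN a3 -> wL_ev m a = (3 ^ (3 * m) + 3 ^ ((5 * m) %/ 2))%N)) /\
  (~ in_ideal_u1sq a -> wL_ev m a = (3 ^ (3 * m) - 3 ^ (2 * m))%N).
Proof.
have [k m_eq k_odd] : exists2 k, m = (k + k)%N & odd k.
  by exists (m %/ 4 * 2 + 1)%N; [have := divn_eq m 4; lia | rewrite addn1 /= oddM andbF].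
subst m; have k_gt0 : (0 < k)%N by case: k k_odd {hF hm}.
have kk_gt0 : (0 < k + k)%N by rewrite addn_gt0 k_gt0.
have hF3 : 3 \in [pchar F] := card_finPcharP hF (isT : prime 3).
have [-> -> ->] : [/\ 3 ^ (3 * (k + k)) = (3 ^ k) ^ 6, 3 ^ (2 * (k + k)) = (3 ^ k) ^ 4
                    & 3 ^ ((5 * (k + k)) %/ 2) = (3 ^ k) ^ 5]%N.
  by split; rewrite -expnM; congr (3 ^ _)%N; lia.
have pow_k : (3 ^ k = 3 * 3 ^ (k - 1))%N by rewrite -expnS subn1 prednK.
split; [|split].
- move=> ->; rewrite /wL_ev big1 // => -[[x1 x2] x3] _.
  by rewrite /mulR /TrR /= !mul0r !addr0 tr0 eqxx.
- move=> a3 ->; rewrite (wL_ev_ideal kk_gt0 hF) hF expnD pow_k.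
  split=> [a3Q | a3N].
    rewrite [#|_|](card_scale_isQ (fun y => tr (k + k) y != 0) a3Q) (card_isQ_tr_neq0 k_odd hF).
    by rewrite pow_k !mulnBr !muln1; congr (_ - _)%N; ring.
  rewrite [#|_|](card_scale_isN (two_neq0_pchar3 hF3) (fun y => tr (k + k) y != 0) a3N) (card_isN_tr_neq0 k_odd hF).
  by rewrite pow_k !mulnDr !muln1; congr (_ + _)%N; ring.
move=> /(wL_ev_notin_ideal kk_gt0 hF) ->; rewrite hF expnD.
by rewrite mulnBr muln1; congr (_ - _)%N; ring.
Qed.
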